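(* Let $n\ge 5$. Then for every $1\le r\le n$, every subset of $N(W_r)$ of size at least $n-2$ is a resolving set of $L(n)$.
   Context: For $n\ge 5$, $H(n)$ is the graph with vertex set $V_1\cup V_2$, where $V_1=\{v_1,\dots,v_n\}$ and $V_2=\{v_iv_j: 1\le i<j\le n\}$, and $v_r$ is adjacent to $v_iv_j$ iff $r\in\{i,j\}$ (no other edges). $L(n)$ is the line graph of $H(n)$: its vertices are the edges $\{v_r,v_iv_j\}$ of $H(n)$ (with $r\in\{i,j\}$), two being adjacent iff they share an endpoint. For $1\le r\le n$, $W_r$ is the set of vertices of $L(n)$ of the form $\{v_r,v_iv_j\}$ (the edges of $H(n)$ incident to $v_r$); it is a maximal clique of size $n-1$. $N(W_r)$ denotes the set of vertices of $L(n)$ not in $W_r$ that are adjacent to some vertex of $W_r$, i.e. $N(W_r)=\{\{v_k,v_iv_j\}: k\neq r,\ \{i,j\}=\{r,k\}\}$, a set of size $n-1$. $d$ is the shortest-path distance; a set $Q$ of vertices is a resolving set of $G$ if any two distinct vertices $x,y$ satisfy $(d(x,q))_{q\in Q}\neq(d(y,q))_{q\in Q}$. *)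

From mathcomp Require Import all_boot.
Set Implicit Arguments. Unset Strict Implicit. Unset Printing Implicit Defensive.

Fixpoint reach (V : finType) (adj : rel V) (k : nat) (x y : V) : bool :=
  match k with
  | 0 => x == y
  | k'.+1 => (x == y) || [exists z, adj x z && reach adj k' z y]
  end.

(* Any shortest walk has length < #|V|, so searching k in
   [0, #|V|] is exhaustive; (unreachable pairs would get #|V|.+1, which
   never happens in the connected graph L(n)). *)
Definition dist (V : finType) (adj : rel V) (x y : V) : nat :=
  find (fun k => reach adj k x y) (iota 0 #|V|.+1).

Definition resolving (V : finType) (adj : rel V) (Q : {set V}) : Prop :=
  forall x y : V, (forall q, q \in Q -> dist adj x q = dist adj y q) -> x = y.

(* Vertices of H(n): v_r  (r : 'I_n)  and  v_i v_j  (a 2-subset {i,j}).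
   Edges of H(n): {v_r, v_i v_j} with r \in {i,j}.  Such an edge is encoded
   by the pair (r, {i,j}).  These edges are the vertices of L(n). *)
Definition Lvert (n : nat) :=
  {p : 'I_n * {set 'I_n} | (#|p.2| == 2) && (p.1 \in p.2)}.

(* Two edges of H(n) are adjacent in L(n) iff they are distinct and share an
   endpoint (the same v_r or the same v_i v_j). *)
Definition Ladj (n : nat) : rel (Lvert n) :=
  fun x y => (x != y) &&
    (((val x).1 == (val y).1) || ((val x).2 == (val y).2)).

Definition W (n : nat) (r : 'I_n) : {set Lvert n} :=
  [set x | (val x).1 == r].

Definition NW (n : nat) (r : 'I_n) : {set Lvert n} :=
  [set y | (y \notin W r) && [exists x, (x \in W r) && Ladj x y]].

(* A vertex {v_a, v_a v_b} of L(n) is the arc a -> b of K_n, and in these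
   coordinates the distance of L(n) is explicit and at most 3.  The vertices of
   N(W_r) are the arcs k -> r, and the distance from a -> b to k -> r (k <> r)
   is: 1 at k = b and 2 elsewhere if a = r; 0 at k = a and 3 elsewhere if
   b = r; 1 at k = a, 2 at k = b and 3 elsewhere otherwise.  A set of n - 2
   such landmarks misses at most one of the n - 1 values of k, and for n >= 5
   it contains a k outside any two given points; this is enough to read a and
   b off the distance vector. *)
From mathcomp Require Import all_boot zify.
Set Implicit Arguments. Unset Strict Implicit.

Lemma find_iota_leq m s N : s <= m < s + N ->
  find (fun k => m <= k) (iota s N) = m - s.
Proof.
elim: N s => [|N IHN] s; first by lia.
by move=> ms /=; case: ifP => [|/negbT sm]; [lia | rewrite IHN; lia].
Qed.

Lemma eq_set2 (T : finType) (a b c d : T) : a != b -> c != d ->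
  ([set a; b] == [set c; d]) = (a == c) && (b == d) || (a == d) && (b == c).
Proof.
move=> ab cd; apply/eqP/idP => [E | /orP[] /andP[/eqP-> /eqP->] //]; last first.
  exact: setUC.
have := set21 a b; have := set22 a b; rewrite E !in_set2.
by case/orP=> /eqP Eb; case/orP=> /eqP Ea; subst; rewrite ?eqxx ?orbT //;
  rewrite eqxx in ab.
Qed.

(* Distance in L(n) between the arcs a -> b and c -> d (read for a <> b, c <> d). *)
Definition arc_dist n (a b c d : 'I_n) : nat :=
  if (a == c) && (b == d) then 0
  else if (a == c) || (a == d) && (b == c) then 1
  else if (b == c) || (d == a) then 2 else 3.

Ltac arc_dist_cases := rewrite /arc_dist;
  repeat (case: eqP => //=; intro; try subst);
  intros; intuition congruence.

Section ArcDistance.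
Variable n : nat.
Implicit Types a b c d e f : 'I_n.

Lemma arc_dist_eq0 a b c d : (arc_dist a b c d == 0) = (a == c) && (b == d).
Proof. by rewrite /arc_dist; repeat case: ifP. Qed.

Lemma arc_dist_le3 a b c d : arc_dist a b c d <= 3.
Proof. by rewrite /arc_dist; repeat case: ifP. Qed.

Lemma arc_dist_step a b c d e f : a != b -> c != d -> e != f ->
  arc_dist a b c d = 1 -> arc_dist a b e f <= (arc_dist c d e f).+1.
Proof. by move=> /eqP ab /eqP cd /eqP ef; arc_dist_cases. Qed.

Lemma arc_dist_descent a b e f : a != b -> e != f -> 0 < arc_dist a b e f ->
  exists c d, [/\ c != d, arc_dist a b c d = 1 &
                  arc_dist c d e f = (arc_dist a b e f).-1].
Proof.
move=> /eqP ab /eqP ef pos.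
have [toward | away] := boolP ((a == e) || (a == f) && (b == e)).
  by exists e, f; split => //; move: toward pos; arc_dist_cases.
have [be | be] := boolP (b == e).
  by exists b, a; split => //; move: away be pos; arc_dist_cases.
by exists a, e; split => //; move: away be pos; arc_dist_cases.
Qed.

End ArcDistance.

Section ArcCoordinates.
Variable n : nat.
Implicit Types (a b : 'I_n) (x y z : Lvert n).

Definition src x : 'I_n := (val x).1.
Definition dst x : 'I_n := odflt (src x) [pick j in (val x).2 :\ src x].

Lemma src_dst_spec x : src x != dst x /\ (val x).2 = [set src x; dst x].
Proof.
case: x => [[a A] /= xP]; have /andP[/eqP cardA aA] := xP; rewrite /dst /src /=.
move: cardA; rewrite (cardsD1 a A) aA add1n => -[/eqP/cards1P[b Ab]].
have /setD1P[ba bA] : b \in A :\ a by rewrite Ab set11.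
rewrite Ab; case: pickP => [j|]; last by move/(_ b); rewrite set11.
by rewrite in_set1 => /eqP-> /=; rewrite eq_sym ba -(setD1K aA) Ab.
Qed.

Lemma src_neq_dst x : src x != dst x.
Proof. by case: (src_dst_spec x). Qed.

Lemma Lvert_eqE x y : (x == y) = (src x == src y) && (dst x == dst y).
Proof.
apply/eqP/andP => [-> // | [/eqP Es /eqP Ed]]; apply: val_inj.
have [_ Ex] := src_dst_spec x; have [_ Ey] := src_dst_spec y.
by move: Ex Ey Es; rewrite /src Ed; case: (val x) (val y) => [a A] [c C] /= -> -> ->.
Qed.

Definition ldist x y := arc_dist (src x) (dst x) (src y) (dst y).

Lemma ldist_eq0 x y : (ldist x y == 0) = (x == y).
Proof. by rewrite arc_dist_eq0 Lvert_eqE. Qed.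

Lemma Ladj_ldist x y : Ladj x y = (ldist x y == 1).
Proof.
have [nx Ex] := src_dst_spec x; have [ny Ey] := src_dst_spec y.
rewrite /Ladj Ex Ey eq_set2 // -/(src x) -/(src y) Lvert_eqE /ldist /arc_dist.
rewrite [dst y == _]eq_sym.
by case: (src x == src y); case: (dst x == dst y); case: (src x == dst y);
   case: (dst x == src y).
Qed.

Lemma arc_subproof a b : a != b -> (#|[set a; b]| == 2) && (a \in [set a; b]).
Proof. by move=> ab; rewrite cards2 ab set21. Qed.

Definition arc a b (ab : a != b) : Lvert n := Sub (a, [set a; b]) (arc_subproof ab).

Lemma arc_coords a b (ab : a != b) : src (arc ab) = a /\ dst (arc ab) = b.
Proof.
have [nab E] := src_dst_spec (arc ab); split => //.
have : dst (arc ab) \in [set a; b] by rewrite [[set a; b]]E set22.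
by rewrite in_set2 eq_sym (negbTE nab) => /eqP.
Qed.

Lemma reach_ldist k x y : reach (@Ladj n) k x y = (ldist x y <= k).
Proof.
elim: k x y => [|k IHk] x y /=; first by rewrite leqn0 ldist_eq0.
rewrite -ldist_eq0; apply/idP/idP => [/orP[/eqP-> // | /existsP[z]] | ].
  rewrite Ladj_ldist IHk => /andP[/eqP xz zy].
  have : ldist x y <= (ldist z y).+1.
    exact: arc_dist_step (src_neq_dst x) (src_neq_dst z) (src_neq_dst y) xz.
  lia.
have [-> // | pos le_k] := posnP (ldist x y).
have [c [d [cd xcd cdy]]] :=
  arc_dist_descent (src_neq_dst x) (src_neq_dst y) pos.
have [sz dz] := arc_coords cd.
have xz : ldist x (arc cd) = 1 by rewrite /ldist sz dz.
have zy : ldist (arc cd) y = (ldist x y).-1 by rewrite /ldist sz dz.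
by apply/existsP; exists (arc cd); rewrite Ladj_ldist IHk xz zy eqxx; lia.
Qed.

Lemma card_Lvert_ge x : n.-1 <= #|{: Lvert n}|.
Proof.
have dst_onto : [set~ src x] \subset dst @: [pred y | src y == src x].
  apply/subsetP => b; rewrite in_setC1 eq_sym => ab; have [sa _] := arc_coords ab.
  by apply/imsetP; exists (arc ab); rewrite ?inE ?sa // (arc_coords ab).2.
rewrite -{1}(card_ord n) -(cardsC1 (src x)).
exact: leq_trans (subset_leq_card dst_onto) (leq_trans (leq_imset_card _ _) (max_card _)).
Qed.

Lemma dist_ldist x y : 3 < n -> dist (@Ladj n) x y = ldist x y.
Proof.
move=> n_gt3; rewrite /dist (eq_find (fun k => reach_ldist k x y)) find_iota_leq ?subn0 //.
rewrite add0n ltnS (leq_trans (arc_dist_le3 _ _ _ _)) //.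
by apply: leq_trans (card_Lvert_ge x); lia.
Qed.

Lemma NW_coords r x : x \in NW r -> src x <> r /\ dst x = r.
Proof.
rewrite inE => /andP[xW /existsP[z /andP[zW]]]; rewrite !inE -!/(src _) in xW zW.
rewrite Ladj_ldist /ldist /arc_dist (eqP zW) [r == _]eq_sym (negbTE xW) /=.
case: ifP => [/andP[/eqP<- _] _ | _]; last by case: ifP.
by split => //; apply/eqP.
Qed.

End ArcCoordinates.

Section Landmarks.
Variables (n : nat) (r : 'I_n) (K : {set 'I_n}).
Hypotheses (n_ge5 : 5 <= n) (r_notin_K : r \notin K) (K_large : n - 2 <= #|K|).

Lemma landmark_of_pair u v : u <> r -> v <> r -> u <> v -> u \in K \/ v \in K.
Proof.
move=> /eqP ur /eqP vr /eqP uv; apply/orP/negPn/negP; rewrite negb_or => /andP[uK vK].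
have sub : u |: (v |: K) \subset [set~ r].
  apply/subsetP => k; rewrite !inE => /or3P[/eqP-> | /eqP-> | kK] //.
  by apply: contraNneq r_notin_K => <-.
have := subset_leq_card sub; rewrite !cardsU1 cardsC1 card_ord !inE negb_or uv uK vK /=.
by move/(leq_trans (leq_add (leqnn 2) K_large)); lia.
Qed.

Lemma landmark_avoiding p1 p2 : exists2 k, k \in K & k <> p1 /\ k <> p2.
Proof.
have : 0 < #|K :\ p1 :\ p2|.
  have := cardsD1 p1 K; have := cardsD1 p2 (K :\ p1).
  by case: (p1 \in K); case: (p2 \in K :\ p1); lia.
by case/card_gt0P => k; rewrite !inE => /and3P[/eqP k2 /eqP k1 kK]; exists k.
Qed.

Ltac refute_at_pair dist_at u v :=
  have [||| /dist_at | /dist_at] := @landmark_of_pair u v; try congruence;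
  arc_dist_cases.

Lemma landmarks_separate a b a' b' : a != b -> a' != b' ->
  {in K, forall k, arc_dist a b k r = arc_dist a' b' k r} -> a = a' /\ b = b'.
Proof.
move=> /eqP ab /eqP ab' same.
have at_landmark k : k \in K -> arc_dist a b k r = arc_dist a' b' k r /\ k <> r.
  by move=> kK; split; [exact: same | move=> kr; move: kK; rewrite kr (negbTE r_notin_K)].
case: (a =P r) => ar; case: (a' =P r) => ar'.
- split; first congruence.
  case: (b =P b') => [// | bb].
  by refute_at_pair at_landmark b b'.
- have [k /at_landmark] := landmark_avoiding a' b'; arc_dist_cases.
- have [k /at_landmark] := landmark_avoiding a b; arc_dist_cases.
case: (b =P r) => br; case: (b' =P r) => br'.
- split; last congruence.
  case: (a =P a') => [// | aa].
  by refute_at_pair at_landmark a a'.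
- by refute_at_pair at_landmark a' b'.
- by refute_at_pair at_landmark a b.
case: (a =P a') => aa.
  split => //; case: (b =P b') => [// | bb].
  by refute_at_pair at_landmark b b'.
by refute_at_pair at_landmark a a'.
Qed.

End Landmarks.

Theorem lemma3p3 (n : nat) (hn : 5 <= n) (r : 'I_n) (S : {set Lvert n}) :
  S \subset NW r -> n - 2 <= #|S| -> resolving (@Ladj n) S.
Proof.
move=> S_NW S_large x y same_dist.
have landmark q : q \in S -> src q <> r /\ dst q = r.
  by move/(subsetP S_NW)/NW_coords.
pose K := [set src q | q in S].
have r_notin_K : r \notin K.
  by apply/imsetP => -[q qS qr]; case: (landmark q qS); rewrite qr.
have K_large : n - 2 <= #|K|.
  rewrite card_in_imset // => q q' qS q'S eq_src; apply/eqP.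
  by rewrite Lvert_eqE eq_src (landmark q qS).2 (landmark q' q'S).2 !eqxx.
have same_K k : k \in K -> arc_dist (src x) (dst x) k r = arc_dist (src y) (dst y) k r.
  case/imsetP=> q qS ->; have := same_dist q qS.
  by rewrite !dist_ldist ?(leq_trans _ hn) // /ldist (landmark q qS).2.
have [eq_src eq_dst] :=
  landmarks_separate hn r_notin_K K_large (src_neq_dst x) (src_neq_dst y) same_K.
by apply/eqP; rewrite Lvert_eqE eq_src eq_dst !eqxx.
Qed.
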